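(* For every $\varepsilon>0$, any deterministic algorithm that, given query access to the distance matrix, estimates the graphic TSP cost (respectively the $(1,2)$-TSP cost) of an $n$-vertex instance to within a factor $(2-\varepsilon)$ requires $\Omega(\varepsilon n^2)$ queries.
   Context: For a connected unweighted undirected graph $G=(V,E)$ with $n\ge 2$ vertices, the graphic TSP cost is $\min \sum_{i=1}^{n} d_G(v_i,v_{i+1})$ over cyclic orderings $(v_1,\dots,v_n)$ of $V$ ($v_{n+1}=v_1$), where $d_G$ is shortest-path distance; the distance matrix has entries $d_G(u,v)$. A $(1,2)$-TSP instance is a metric on $n$ points with all distances between distinct points in $\{1,2\}$, cost defined analogously. Estimating to within a factor $c$ means outputting $X$ with $\mathrm{OPT}\le X\le c\,\mathrm{OPT}$. *)

From HB Require Import structures.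
From mathcomp Require Import all_boot all_order all_fingroup all_algebra.
From mathcomp Require Import reals.
Set Implicit Arguments. Unset Strict Implicit. Unset Printing Implicit Defensive.
Import Order.TTheory GRing.Theory Num.Theory.

(* A deterministic algorithm with query access to a distance matrix
   d : V -> V -> nat is a decision tree: at a node it queries the entry d u v
   and branches on the (natural-number) answer; at a leaf it outputs a value. *)
Inductive qtree (V O : Type) : Type :=
  | Leaf of O
  | Ask of V & V & (nat -> qtree V O).
Arguments Leaf {V O}.
Arguments Ask {V O}.

Fixpoint run_output (V O : Type) (d : V -> V -> nat) (t : qtree V O) : O :=
  match t with
  | Leaf x => x
  | Ask u v k => run_output d (k (d u v))
  end.

Fixpoint run_queries (V O : Type) (d : V -> V -> nat) (t : qtree V O) : nat :=
  match t with
  | Leaf _ => 0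
  | Ask u v k => (run_queries d (k (d u v))).+1
  end.

Definition tour_cost (n : nat) (d : 'I_n -> 'I_n -> nat) (s : {perm 'I_n}) : nat :=
  \sum_(i < n) d (s i) (s (ordS i)).

Definition tsp_opt (n : nat) (d : 'I_n -> 'I_n -> nat) : nat :=
  \big[minn/tour_cost d 1%g]_(s : {perm 'I_n}) tour_cost d s.

(* length of a shortest e-path from u to v (a path of length k is a k-tuple of
   successive vertices); for connected graphs this is < #|T|. *)
Definition gdist (T : finType) (e : rel T) (u v : T) : nat :=
  find (fun k => [exists p : k.-tuple T, path e u p && (last u p == v)])
       (iota 0 #|T|).

Definition graphic_matrix (n : nat) (d : 'I_n -> 'I_n -> nat) : Prop :=
  exists e : rel 'I_n,
    [/\ symmetric e, irreflexive e, (forall u v, connect e u v)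
      & forall u v, d u v = gdist e u v].

(* d is a (1,2)-TSP instance: a metric with all distances between distinct
   points in {1,2} (the triangle inequality then holds automatically) *)
Definition onetwo_matrix (n : nat) (d : 'I_n -> 'I_n -> nat) : Prop :=
  (forall u, d u u = 0%N) /\ (forall u v, d u v = d v u) /\
  (forall u v, u != v -> (d u v == 1%N) || (d u v == 2%N)).

Definition estimates (R : realType) (n : nat) (valid : ('I_n -> 'I_n -> nat) -> Prop)
    (c : R) (t : qtree 'I_n R) : Prop :=
  forall d, valid d ->
    ((tsp_opt d)%:R <= run_output d t)%R /\ (run_output d t <= c * (tsp_opt d)%:R)%R.

Definition query_lower_bound (R : realType) (n : nat)
    (valid : ('I_n -> 'I_n -> nat) -> Prop) (eps bound : R) : Prop :=
  forall t : qtree 'I_n R, estimates valid (2 - eps)%R t ->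
    exists d, valid d /\ (bound <= (run_queries d t)%:R)%R.

From HB Require Import structures.
From mathcomp Require Import all_boot all_order all_fingroup all_algebra.
From mathcomp Require Import reals.
From mathcomp Require Import ring lra.
Import Order.TTheory GRing.Theory Num.Theory.
Set Implicit Arguments. Unset Strict Implicit.

(* Proof idea: an adversary argument.  Run the algorithm on a base instance d0
   in which all distances between distinct points are 2, except possibly the
   distances from one hub vertex c (the star graph in the graphic case); its
   optimum is at least 2n - 2.  Let L be the list of queried entries and build
   d1 from d0 by lowering to 1 every distance between distinct points that was
   queried in neither direction.  The algorithm cannot tell d1 from d0, so it
   outputs the same X on both.  Averaging tour costs over all permutations
   shows (n - 1) OPT(d1) <= n(n - 1) + 2|L|; hence if |L| < eps n^2 / 8 the
   single output X cannot lie in [OPT(d0), (2 - eps) OPT(d1)]. *)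

Fixpoint qlist (V O : Type) (d : V -> V -> nat) (t : qtree V O) : seq (V * V) :=
  match t with
  | Leaf _ => [::]
  | Ask u v k => (u, v) :: qlist d (k (d u v))
  end.

Lemma size_qlist (V O : Type) (d : V -> V -> nat) (t : qtree V O) :
  size (qlist d t) = run_queries d t.
Proof. by elim: t => //= u v k IH; rewrite IH. Qed.

Lemma run_agree (V : eqType) (O : Type) (d d' : V -> V -> nat) (t : qtree V O) :
  (forall u v, (u, v) \in qlist d t -> d' u v = d u v) ->
  run_output d' t = run_output d t.
Proof.
elim: t => //= u v k IH same.
rewrite same ?mem_head //; apply: IH => x y Hxy; apply: same.
by rewrite in_cons Hxy orbT.
Qed.

Lemma tsp_opt_le (n : nat) (d : 'I_n -> 'I_n -> nat) (s : {perm 'I_n}) :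
  tsp_opt d <= tour_cost d s.
Proof. by rewrite /tsp_opt (bigminD1 s) // geq_minl. Qed.

Lemma tsp_opt_ge (n : nat) (d : 'I_n -> 'I_n -> nat) (m : nat) :
  (forall s, m <= tour_cost d s) -> m <= tsp_opt d.
Proof.
move=> H; rewrite /tsp_opt; apply: (big_ind (fun x => m <= x)) => //.
by move=> x y hx hy; rewrite leq_min hx hy.
Qed.

Lemma ordS_neq (n : nat) (i : 'I_n) : 1 < n -> ordS i != i.
Proof.
move=> hn; apply/eqP => /(congr1 val) /=.
case: n i hn => [[]//|n] i hn /=.
have := ltn_ord i; rewrite ltnS leq_eqVlt => /orP [/eqP ->|hi].
  by rewrite modnn; case: n i hn.
by rewrite modn_small // => /eqP; rewrite (gtn_eqF (ltnSn _)).
Qed.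

(* Weighted lower bound: if d a b + w a + w b >= 2 for all a != b, then every
   tour costs at least 2n - 2 (sum of w); each tour edge pays for itself. *)
Lemma tour_cost_weight_lb (n : nat) (d : 'I_n -> 'I_n -> nat) (w : 'I_n -> nat) :
  1 < n -> (forall a b, a != b -> 2 <= d a b + w a + w b) ->
  forall s, 2 * n <= tour_cost d s + 2 * \sum_a w a.
Proof.
move=> hn H s.
have w_s : \sum_(i < n) w (s i) = \sum_a w a.
  by rewrite [RHS](reindex_inj (@perm_inj _ s)).
have w_sS : \sum_(i < n) w (s (ordS i)) = \sum_a w a.
  by rewrite [RHS](reindex_inj (inj_comp (@perm_inj _ s) (@ordS_inj n))).
have : \sum_(i < n) 2 <= \sum_(i < n) (d (s i) (s (ordS i)) + w (s i) + w (s (ordS i))).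
  by apply: leq_sum => i _; apply: H; rewrite (inj_eq perm_inj) eq_sym ordS_neq.
by rewrite !big_split /= w_s w_sS sum_nat_const card_ord /tour_cost mulnC -addnA addnn -mul2n.
Qed.

Definition perm_fiber (n : nat) (i j a b : 'I_n) : {set {perm 'I_n}} :=
  [set s : {perm 'I_n} | (s i == a) && (s j == b)].

Lemma perm_map2 (T : finType) (a b a' b' : T) : a != b -> a' != b' ->
  exists r : {perm T}, r a = a' /\ r b = b'.
Proof.
move=> hab hab'.
exists (tperm a a' * tperm (tperm a a' b) b')%g.
rewrite !permM tpermL; split; last by rewrite tpermL.
apply: tpermD; last by rewrite eq_sym.
by rewrite -[X in _ != X](tpermL a a') (inj_eq perm_inj) eq_sym.
Qed.

Lemma perm_fiber_le (n : nat) (i j a b a' b' : 'I_n) : a != b -> a' != b' ->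
  #|perm_fiber i j a b| <= #|perm_fiber i j a' b'|.
Proof.
move=> h h'; have [r [ra rb]] := perm_map2 h h'.
rewrite -(card_imset (perm_fiber i j a b) (mulIg r)).
apply: subset_leq_card; apply/subsetP => x /imsetP [s].
rewrite !inE => /andP [/eqP si /eqP sj] ->.
by rewrite !permM si sj ra rb !eqxx.
Qed.

Lemma perm_fiber_diag (n : nat) (i j a : 'I_n) : i != j -> #|perm_fiber i j a a| = 0.
Proof.
move=> hij; apply/eqP; rewrite cards_eq0; apply/eqP/setP => s; rewrite !inE.
apply/negP => /andP [/eqP h1 /eqP h2].
by move: hij; rewrite -(inj_eq (@perm_inj _ s)) h1 h2 eqxx.
Qed.

Lemma sum_perm_pair (n : nat) (i j : 'I_n) (g : 'I_n -> 'I_n -> nat) : i != j ->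
  \sum_(s : {perm 'I_n}) g (s i) (s j) =
  #|perm_fiber i j i j| * \sum_a \sum_b (a != b) * g a b.
Proof.
move=> hij.
have expand (s : {perm 'I_n}) : g (s i) (s j) = \sum_a \sum_b ((s i == a) && (s j == b)) * g a b.
  rewrite (bigD1 (s i)) //= [X in _ = _ + X]big1 ?addn0; last first.
    by move=> a ha; rewrite big1 // => b _; rewrite eq_sym (negPf ha).
  rewrite (bigD1 (s j)) //= [X in _ = _ + X]big1 ?addn0 ?eqxx ?mul1n //.
  by move=> b hb; rewrite eq_sym (negPf hb) andbF.
rewrite (eq_bigr _ (fun s _ => expand s)) exchange_big big_distrr /=.
apply: eq_bigr => a _; rewrite exchange_big big_distrr /=; apply: eq_bigr => b _.
rewrite -big_distrl /= mulnA; congr (_ * _).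
have -> : \sum_(s : {perm 'I_n}) ((s i == a) && (s j == b) : nat) = #|perm_fiber i j a b|.
  by rewrite -sum1_card [RHS]big_mkcond /=; apply: eq_bigr => s _; rewrite inE; case: ifP.
have [->|hab] := eqVneq a b; first by rewrite perm_fiber_diag // muln0.
by rewrite muln1; apply/eqP; rewrite eqn_leq !perm_fiber_le // eq_sym.
Qed.

Lemma sum_offdiag_ones (n : nat) :
  \sum_(a : 'I_n) \sum_(b : 'I_n) (a != b : nat) = n * (n - 1).
Proof.
rewrite -[in n * _](card_ord n) -sum_nat_const; apply: eq_bigr => a _.
rewrite (bigD1 a) //= eqxx add0n (eq_bigr (fun _ => 1)); last first.
  by move=> b hb; rewrite eq_sym hb.
by rewrite sum1_card cardC1 card_ord subn1.
Qed.

(* Averaging over permutations: the image of a fixed pair of distinct points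
   is uniformly distributed over the n (n - 1) ordered pairs of distinct points. *)
Lemma perm_pair_average (n : nat) (i j : 'I_n) (g : 'I_n -> 'I_n -> nat) : i != j ->
  n * (n - 1) * \sum_(s : {perm 'I_n}) g (s i) (s j) =
  n`! * \sum_a \sum_b (a != b) * g a b.
Proof.
move=> hij; have := sum_perm_pair (fun _ _ => 1) hij.
rewrite sum_nat_const card_Sn muln1 => ->.
have -> : \sum_(a : 'I_n) \sum_(b : 'I_n) (a != b) * 1 = n * (n - 1).
  by rewrite -sum_offdiag_ones; apply: eq_bigr => a _; apply: eq_bigr => b _; rewrite muln1.
by rewrite sum_perm_pair // mulnCA mulnA.
Qed.

(* Averaging upper bound: the optimum is at most the average tour cost, which
   is n / (n (n - 1)) times the off-diagonal sum of d. *)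
Lemma tsp_opt_average (n : nat) (d : 'I_n -> 'I_n -> nat) : 1 < n ->
  (n - 1) * tsp_opt d <= \sum_a \sum_b (a != b) * d a b.
Proof.
move=> hn; set G := \sum_a _.
have sum_tours : n * (n - 1) * \sum_(s : {perm 'I_n}) tour_cost d s = n * (n`! * G).
  rewrite /tour_cost exchange_big big_distrr /= (eq_bigr (fun _ => n`! * G)).
    by rewrite sum_nat_const card_ord.
  by move=> i _; apply: perm_pair_average; rewrite eq_sym ordS_neq.
have opt_le_tours : n`! * tsp_opt d <= \sum_(s : {perm 'I_n}) tour_cost d s.
  by rewrite -card_Sn -sum_nat_const; apply: leq_sum => s _; apply: tsp_opt_le.
have n_gt0 : 0 < n by apply: ltnW.
rewrite -(leq_pmul2l (fact_gt0 n)) -(leq_pmul2l n_gt0).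
have -> : n * (n`! * ((n - 1) * tsp_opt d)) = n * (n - 1) * (n`! * tsp_opt d) by ring.
by rewrite -sum_tours leq_mul2l opt_le_tours orbT.
Qed.

Lemma sum_mem_le_size (n : nat) (L : seq ('I_n * 'I_n)) :
  \sum_(a : 'I_n) \sum_(b : 'I_n) ((a, b) \in L : nat) <= size L.
Proof.
rewrite pair_big /= (eq_bigr (fun p => ((p \in L) : nat))); last by case.
have -> : \sum_(p | true && true) ((p \in L) : nat) = \sum_(p in L) 1.
  by rewrite [RHS]big_mkcond; apply: eq_bigr => p _; case: (p \in L).
by rewrite sum1_card card_size.
Qed.

Lemma sum_offdiag_le (n : nat) (L : seq ('I_n * 'I_n)) (d : 'I_n -> 'I_n -> nat) :
  (forall a b, a != b -> d a b <= 1 + ((a, b) \in L) + ((b, a) \in L)) ->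
  \sum_a \sum_b (a != b) * d a b <= n * (n - 1) + 2 * size L.
Proof.
move=> H.
apply: (@leq_trans (\sum_a \sum_b ((a != b : nat) + ((a, b) \in L) + ((b, a) \in L)))).
  apply: leq_sum => a _; apply: leq_sum => b _.
  by case: eqVneq => [_|hab]; [rewrite mul0n | rewrite mul1n H].
rewrite (eq_bigr _ (fun a _ => big_split _ _ _ _ _)) big_split /=.
rewrite (eq_bigr _ (fun a _ => big_split _ _ _ _ _)) big_split /= sum_offdiag_ones.
rewrite -addnA leq_add2l mul2n -addnn leq_add ?sum_mem_le_size //.
by rewrite exchange_big /= sum_mem_le_size.
Qed.

Definition dist12 (n : nat) (E : rel 'I_n) (a b : 'I_n) : nat :=
  if a == b then 0 else if E a b then 1 else 2.

Definition unqueried (n : nat) (L : seq ('I_n * 'I_n)) : rel 'I_n :=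
  fun a b => [&& a != b, (a, b) \notin L & (b, a) \notin L].

Lemma unqueried_sym (n : nat) (L : seq ('I_n * 'I_n)) : symmetric (unqueried L).
Proof. by move=> a b; rewrite /unqueried eq_sym; congr (_ && _); apply: andbC. Qed.

Lemma dist12_onetwo (n : nat) (E : rel 'I_n) : symmetric E -> onetwo_matrix (dist12 E).
Proof.
rewrite /onetwo_matrix /dist12 => symE; split; first by move=> u; rewrite eqxx.
by split=> [u v|u v /negPf ->]; [rewrite eq_sym symE | case: ifP].
Qed.

(* If all edges of E touch the hub c, any tour pays 2 per step except on the
   two steps through c: OPT >= 2n - 2. *)
Lemma dist12_star_opt_lb (n : nat) (E : rel 'I_n) (c : 'I_n) : 1 < n ->
  (forall a b, E a b -> (a == c) || (b == c)) ->
  2 * n <= tsp_opt (dist12 E) + 2.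
Proof.
move=> hn hub; rewrite addnC -leq_subLR; apply: tsp_opt_ge => s; rewrite leq_subLR addnC.
have weight a b : a != b -> 2 <= dist12 E a b + (a == c : nat) + (b == c : nat).
  rewrite /dist12 => /negPf ->; have := hub a b.
  by case: (E a b) => [/(_ isT) /orP [] /eqP ->|_]; rewrite ?eqxx //= addnC; case: eqP.
have sum_hub : \sum_(a : 'I_n) (a == c : nat) = 1.
  by rewrite (bigD1 c) //= eqxx big1 ?addn0 // => a /negPf ->.
by have := tour_cost_weight_lb hn weight s; rewrite sum_hub muln1.
Qed.

Lemma dist12_dense_opt_ub (n : nat) (E : rel 'I_n) (L : seq ('I_n * 'I_n)) : 1 < n ->
  (forall a b, unqueried L a b -> E a b) ->
  (n - 1) * tsp_opt (dist12 E) <= n * (n - 1) + 2 * size L.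
Proof.
move=> hn dense; apply: (leq_trans (tsp_opt_average _ hn)); apply: sum_offdiag_le => a b hab.
have := dense a b; rewrite /dist12 /unqueried (negPf hab) /=.
by case: (E a b); case: ((a, b) \in L); case: ((b, a) \in L) => // /(_ isT).
Qed.

Lemma path_len0 (T : finType) (e : rel T) (u v : T) :
  [exists p : 0.-tuple T, path e u p && (last u p == v)] = (u == v).
Proof.
apply/existsP/idP => [[p]|h]; first by rewrite tuple0.
by exists [tuple]; rewrite /= h.
Qed.

Lemma path_len1 (T : finType) (e : rel T) (u v : T) :
  [exists p : 1.-tuple T, path e u p && (last u p == v)] = e u v.
Proof.
apply/existsP/idP => [[p]|h].
  by case/tupleP: p => x p; rewrite tuple0 /= andbT => /andP [h /eqP <-].
by exists [tuple of [:: v]]; rewrite /= h eqxx.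
Qed.

Lemma gdist_universal (T : finType) (e : rel T) (c : T) : 2 < #|T| ->
  symmetric e -> (forall v, v != c -> e c v) ->
  forall u v, gdist e u v = if u == v then 0 else if e u v then 1 else 2.
Proof.
move=> h3 sym hc u v; rewrite /gdist.
case E: #|T| h3 => [|[|[|m]]] // _ /=.
rewrite path_len0 path_len1; case: eqVneq => //= huv; case: ifP => //= heuv.
suff -> : [exists p : 2.-tuple T, path e u p && (last u p == v)] by [].
apply/existsP; exists [tuple of [:: c; v]] => /=; rewrite eqxx !andbT.
have hu : u != c by apply: contraFN heuv => /eqP hu; rewrite hu hc // -hu eq_sym.
have hv : v != c by apply: contraFN heuv => /eqP hv; rewrite sym hv hc // -hv.
by rewrite sym !hc.
Qed.

Lemma connect_universal (T : finType) (e : rel T) (c : T) : symmetric e ->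
  (forall v, v != c -> e c v) -> forall u v, connect e u v.
Proof.
move=> sym hc u v; apply: (connect_trans (y := c)).
  have [->|h] := eqVneq u c; first exact: connect0.
  by apply: connect1; rewrite sym hc.
have [->|h] := eqVneq v c; first exact: connect0.
by apply: connect1; rewrite hc.
Qed.

Definition hub_graph (n : nat) (c : 'I_n) (F : rel 'I_n) : rel 'I_n :=
  fun a b => (a != b) && [|| a == c, b == c | F a b && F b a].

Lemma hub_graph_sym (n : nat) (c : 'I_n) (F : rel 'I_n) : symmetric (hub_graph c F).
Proof. by move=> a b; rewrite /hub_graph eq_sym [F a b && _]andbC orbCA. Qed.

Lemma hub_graph_graphic (n : nat) (c : 'I_n) (F : rel 'I_n) : 2 < n ->
  graphic_matrix (dist12 (hub_graph c F)).
Proof.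
move=> h3; have hub v : v != c -> hub_graph c F c v by rewrite /hub_graph eqxx eq_sym => ->.
exists (hub_graph c F); split.
- exact: hub_graph_sym.
- by move=> a; rewrite /hub_graph eqxx.
- exact: connect_universal (hub_graph_sym c F) hub.
- by move=> u v; rewrite (gdist_universal _ (hub_graph_sym c F) hub) ?card_ord.
Qed.

Local Open Scope ring_scope.

Lemma estimate_gap (R : realFieldType) (N Q X o1 eps : R) :
  2 <= N -> 0 < eps -> 4 + 2 * eps < eps * N -> 0 <= Q -> 0 <= o1 ->
  2 * N - 2 <= X -> X <= (2 - eps) * o1 -> (N - 1) * o1 <= N * (N - 1) + 2 * Q ->
  eps * N ^+ 2 / 8 <= Q.
Proof.
move=> hN he hNe hQ ho hX hXo hNo; rewrite leNgt; apply/negP => hQe.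
have [h2|h2] := lerP (2 - eps) 0.
  have : (2 - eps) * o1 <= 0 by nra.
  lra.
have lo : (N - 1) * (2 * N - 2) <= (N - 1) * X by apply: ler_wpM2l; lra.
have hi : (N - 1) * X <= (2 - eps) * ((N - 1) * o1).
  by rewrite mulrCA; apply: ler_wpM2l; lra.
have mid : (2 - eps) * ((N - 1) * o1) <= (2 - eps) * (N * (N - 1) + 2 * Q).
  by apply: ler_wpM2l; lra.
have hQ4 : (2 - eps) * (2 * Q) <= 4 * Q by nra.
have hN4 : N * (4 + 2 * eps) <= N * (eps * N) by apply: ler_wpM2l; lra.
nra.
Qed.

Lemma adversary_lower_bound (R : realType) (n : nat)
    (valid : ('I_n -> 'I_n -> nat) -> Prop) (d0 : 'I_n -> 'I_n -> nat)
    (d1 : seq ('I_n * 'I_n) -> 'I_n -> 'I_n -> nat) (eps : R) :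
  (2 < n)%N -> 0 < eps -> 4 + 2 * eps < eps * n%:R ->
  valid d0 -> (forall L, valid (d1 L)) ->
  (forall L u v, (u, v) \in L -> d1 L u v = d0 u v) ->
  (2 * n <= tsp_opt d0 + 2)%N ->
  (forall L, (n - 1) * tsp_opt (d1 L) <= n * (n - 1) + 2 * size L)%N ->
  query_lower_bound valid eps (eps * n%:R ^+ 2 / 8).
Proof.
move=> h3 he hNe V0 V1 agree opt0 opt1 t est; exists d0; split => //.
set L := qlist d0 t.
have same : run_output (d1 L) t = run_output d0 t by apply: run_agree; apply: agree.
have [lo0 _] := est d0 V0; have [_ up1] := est (d1 L) (V1 L); rewrite same in up1.
have n_gt0 : (0 < n)%N by apply: ltn_trans h3.
rewrite -size_qlist; apply: (estimate_gap _ he hNe _ _ _ up1); rewrite ?ler0n //.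
- by rewrite (ler_nat R 2 n) ltnW.
- apply: le_trans lo0; rewrite lerBlDr -(natrM R 2 n) -(natrD R) ler_nat; exact: opt0.
- by move: (opt1 L); rewrite -(ler_nat R) !natrM natrD !natrM natrB.
Qed.

Lemma dist12_lower_bound (R : realType) (n : nat)
    (valid : ('I_n -> 'I_n -> nat) -> Prop) (c : 'I_n)
    (E0 : rel 'I_n) (E1 : seq ('I_n * 'I_n) -> rel 'I_n) (eps : R) :
  (2 < n)%N -> 0 < eps -> 4 + 2 * eps < eps * n%:R ->
  valid (dist12 E0) -> (forall L, valid (dist12 (E1 L))) ->
  (forall a b, E0 a b -> (a == c) || (b == c)) ->
  (forall L a b, unqueried L a b -> E1 L a b) ->
  (forall L a b, (a, b) \in L -> E1 L a b = E0 a b) ->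
  query_lower_bound valid eps (eps * n%:R ^+ 2 / 8).
Proof.
move=> h3 he hNe V0 V1 star dense agree.
apply: (adversary_lower_bound (d1 := fun L => dist12 (E1 L)) h3 he hNe V0 V1).
- by move=> L u v uvL; rewrite /dist12 agree.
- exact: dist12_star_opt_lb (ltnW h3) star.
- by move=> L; apply: dist12_dense_opt_ub (ltnW h3) (dense L).
Qed.

(* Past n0 the instance size exceeds 2 and beats the threshold of estimate_gap. *)
Lemma large_instance (R : realType) (eps : R) (n : nat) : 0 < eps ->
  ((Num.Def.truncn (4 / eps)).+3 <= n)%N -> (2 < n)%N /\ 4 + 2 * eps < eps * n%:R.
Proof.
move=> he hn; split; first exact: leq_trans hn.
have lt_trunc := truncnS_gt (4 / eps).
have le_n : (Num.Def.truncn (4 / eps)).+1%:R + 2 <= n%:R :> R.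
  by rewrite -natrD ler_nat addn2.
have : eps * (4 / eps + 2) < eps * n%:R by rewrite ltr_pM2l //; lra.
by rewrite mulrDr mulrCA mulfV ?gt_eqF // mulr1; lra.
Qed.

Theorem mainTheorem6 (R : realType) :
  exists c : R, 0 < c /\
    forall eps : R, 0 < eps ->
      exists n0 : nat, forall n : nat, (n0 <= n)%N ->
        query_lower_bound (@graphic_matrix n) eps (c * eps * (n ^ 2)%:R) /\
        query_lower_bound (@onetwo_matrix n) eps (c * eps * (n ^ 2)%:R).
Proof.
exists (1 / 8); split; first lra.
move=> eps he; exists (Num.Def.truncn (4 / eps)).+3 => n hn.
have [h3 hNe] := large_instance he hn.
have -> : 1 / 8 * eps * (n ^ 2)%:R = eps * n%:R ^+ 2 / 8 :> R by rewrite natrX; field.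
pose c : 'I_n := Ordinal (ltnW (ltnW h3)).
split.
- apply: (dist12_lower_bound (c := c) (E0 := hub_graph c (fun _ _ => false))
    (E1 := fun L => hub_graph c (unqueried L)) h3 he hNe).
  + exact: hub_graph_graphic.
  + by move=> L; apply: hub_graph_graphic.
  + by move=> a b /andP [_]; rewrite andbF orbF.
  + move=> L a b uab; rewrite /hub_graph -(unqueried_sym L a b) uab !orbT andbT.
    by case/andP: uab.
  + by move=> L a b abL; rewrite /hub_graph /unqueried abL !andbF.
- apply: (dist12_lower_bound (c := c) (E0 := fun _ _ => false) (E1 := @unqueried n)
    h3 he hNe).
  + by apply: dist12_onetwo.
  + by move=> L; apply/dist12_onetwo/unqueried_sym.
  + by [].
  + by move=> L a b.
  + by move=> L a b abL; rewrite /unqueried abL /= andbF.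
Qed.
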